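(* The functors $\downarrow$ and $\uparrow$ restrict to mutually inverse isomorphisms of categories $$\mathcal S\!\uparrow\;\cong\;\mathcal S\!\downarrow,\qquad \mathcal S(n)\!\uparrow\;\cong\;\mathcal S(n)\!\downarrow,\qquad \mathcal S_\ell\!\uparrow\;\cong\;\mathcal S_{\ell+1}\!\downarrow,\qquad \mathcal S_\ell(n)\!\uparrow\;\cong\;\mathcal S_{\ell+1}(n)\!\downarrow$$ (with $\downarrow$ going from left to right and $\uparrow$ from right to left).
   Context: Let $R$ be a commutative principal ideal domain, $p$ a generator of a maximal ideal. A $p$-module is a finite-length $R$-module annihilated by some power of $p$. $\mathcal S$ is the category of embeddings $(A\subset B)$ of a submodule in a $p$-module, morphisms $(A\subset B)\to(A'\subset B')$ being $R$-maps $f:B\to B'$ with $f(A)\subseteq A'$. $\mathcal S_\ell$: full subcategory with $p^\ell A=0$; $\mathcal S(n)$: full subcategory with $p^nB=0$; $\mathcal S_\ell(n)=\mathcal S_\ell\cap\mathcal S(n)$. Lifting: $(A\subset B)\!\uparrow=(p^{-1}A\subset B)$ where $p^{-1}A=\{b\in B:pb\in A\}$; reducing: $(A\subset B)\!\downarrow=(pA\subset B)$; both are the identity on underlying maps. For $\mathcal U$ one of $\mathcal S,\mathcal S_\ell,\mathcal S(n),\mathcal S_\ell(n)$, $\mathcal U\!\uparrow$ (resp. $\mathcal U\!\downarrow$) is the full subcategory of $\mathcal S$ of all objects $X\!\uparrow$ (resp. $X\!\downarrow$) with $X\in\mathcal U$. *)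

From HB Require Import structures.
From mathcomp Require Import all_boot all_algebra.
Set Implicit Arguments. Unset Strict Implicit. Unset Printing Implicit Defensive.
Import GRing.Theory.
Local Open Scope ring_scope.

Definition is_ideal (R : idomainType) (I : R -> Prop) : Prop :=
  I 0 /\ (forall x y, I x -> I y -> I (x + y)) /\ (forall r x, I x -> I (r * x)).

Definition principal_ideal (R : idomainType) (a : R) : R -> Prop :=
  fun x => exists r, x = r * a.

Definition is_PID (R : idomainType) : Prop :=
  forall I : R -> Prop, is_ideal I -> exists a, forall x, I x <-> principal_ideal a x.

Definition maximal_ideal (R : idomainType) (I : R -> Prop) : Prop :=
  is_ideal I /\ ~ I 1 /\
  forall J : R -> Prop, is_ideal J -> (forall x, I x -> J x) ->
    (forall x, J x <-> I x) \/ J 1.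

Definition submod (R : idomainType) (B : lmodType R) (A : B -> Prop) : Prop :=
  A 0 /\ (forall x y, A x -> A y -> A (x + y)) /\ (forall (r : R) x, A x -> A (r *: x)).

Definition finite_length (R : idomainType) (B : lmodType R) : Prop :=
  exists n : nat, forall (m : nat) (C : nat -> B -> Prop),
    (forall i, submod (C i)) ->
    (forall i, (i < m)%N -> (forall b, C i b -> C i.+1 b) /\ exists b, C i.+1 b /\ ~ C i b) ->
    (m <= n)%N.

Definition p_module (R : idomainType) (p : R) (B : lmodType R) : Prop :=
  finite_length B /\ exists k : nat, forall b : B, p ^+ k *: b = 0.

(* An object (A ⊆ B) of S: B a p-module, A a submodule. *)
Definition is_obj (R : idomainType) (p : R) (B : lmodType R) (A : B -> Prop) : Prop :=
  p_module p B /\ submod A.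

Arguments is_obj {R} p B A.

(* Lifting and reducing (both are the identity on B and on maps). *)
Definition up (R : idomainType) (p : R) (B : lmodType R) (A : B -> Prop) : B -> Prop :=
  fun b => A (p *: b).
Definition down (R : idomainType) (p : R) (B : lmodType R) (A : B -> Prop) : B -> Prop :=
  fun b => exists a, A a /\ b = p *: a.

(* Full subcategories of S, given by their classes of objects. *)
Definition cat_class (R : idomainType) := forall B : lmodType R, (B -> Prop) -> Prop.

Definition catS (R : idomainType) (p : R) : cat_class R :=
  fun B A => is_obj p B A.
Definition catSl (R : idomainType) (p : R) (l : nat) : cat_class R :=
  fun B A => is_obj p B A /\ forall a, A a -> p ^+ l *: a = 0.
Definition catSn (R : idomainType) (p : R) (n : nat) : cat_class R :=
  fun B A => is_obj p B A /\ forall b : B, p ^+ n *: b = 0.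
Definition catSln (R : idomainType) (p : R) (l n : nat) : cat_class R :=
  fun B A => is_obj p B A /\ (forall a, A a -> p ^+ l *: a = 0)
             /\ forall b : B, p ^+ n *: b = 0.

Definition up_cat (R : idomainType) (p : R) (U : cat_class R)
  (B : lmodType R) (A : B -> Prop) : Prop := exists A0 : B -> Prop, U B A0 /\ forall b, A b <-> up p A0 b.
Definition down_cat (R : idomainType) (p : R) (U : cat_class R)
  (B : lmodType R) (A : B -> Prop) : Prop := exists A0 : B -> Prop, U B A0 /\ forall b, A b <-> down p A0 b.

Arguments up_cat {R} p U B A.
Arguments down_cat {R} p U B A.

Definition mor (R : idomainType) (B B' : lmodType R) (A : B -> Prop) (A' : B' -> Prop)
  (f : B -> B') : Prop := forall b, A b -> A' (f b).

(* ↓ : U↑ -> V↓ and ↑ : V↓ -> U↑ are well-defined functors (identity on maps)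
   and mutually inverse (on objects; on maps both are the identity). *)
Definition updown_iso (R : idomainType) (p : R) (U V : cat_class R) : Prop :=
  (forall (B : lmodType R) (A : B -> Prop), up_cat p U B A ->
     down_cat p V B (down p A) /\ forall b, up p (down p A) b <-> A b)
  /\ (forall (B : lmodType R) (A : B -> Prop), down_cat p V B A ->
     up_cat p U B (up p A) /\ forall b, down p (up p A) b <-> A b)
  /\ (forall (B B' : lmodType R) (A : B -> Prop) (A' : B' -> Prop) (f : {linear B -> B'}),
       up_cat p U B A -> up_cat p U B' A' -> mor A A' f -> mor (down p A) (down p A') f)
  /\ (forall (B B' : lmodType R) (A : B -> Prop) (A' : B' -> Prop) (f : {linear B -> B'}),
       down_cat p V B A -> down_cat p V B' A' -> mor A A' f -> mor (up p A) (up p A') f).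

From mathcomp Require Import all_boot all_algebra.
Set Implicit Arguments. Unset Strict Implicit. Unset Printing Implicit Defensive.
Import GRing.Theory.
Local Open Scope ring_scope.

(* Both operations fix B and preserve submodules.  On the images they are
   mutually inverse: p (p^-1 A) = A when A = pA', and p^-1 (pA) = A when
   A = p^-1 A'.  Linear maps commute with multiplication by p, which gives
   functoriality, and the shift of l comes from p^(l+1) (p^-1 A) ⊆ p^l A and
   p^l (pA) = p^(l+1) A. *)

Section LiftReduce.

Variables (R : idomainType) (p : R) (B : lmodType R).
Implicit Types A : B -> Prop.

Lemma scalerAC (r s : R) (x : B) : r *: (s *: x) = s *: (r *: x).
Proof. by rewrite !scalerA mulrC. Qed.

Lemma submod_up A : submod A -> submod (up p A).
Proof.
move=> [A_0 [AD AZ]]; split; rewrite /up; first by rewrite scaler0.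
split=> [x y Ax Ay | r x Ax]; first by rewrite scalerDr; apply: AD.
by rewrite scalerAC; apply: AZ.
Qed.

Lemma submod_down A : submod A -> submod (down p A).
Proof.
move=> [A_0 [AD AZ]]; split; rewrite /down; first by exists 0; rewrite scaler0.
split=> [_ _ [a [Aa ->]] [b [Ab ->]] | r _ [a [Aa ->]]].
  by exists (a + b); rewrite scalerDr; split=> //; apply: AD.
by exists (r *: a); rewrite scalerAC; split=> //; apply: AZ.
Qed.

Lemma up_annihilated A (l : nat) :
  (forall a, A a -> p ^+ l *: a = 0) -> forall a, up p A a -> p ^+ l.+1 *: a = 0.
Proof. by move=> Al a Aa; rewrite exprSr -scalerA; apply: Al. Qed.

Lemma down_annihilated A (l : nat) :
  (forall a, A a -> p ^+ l.+1 *: a = 0) -> forall a, down p A a -> p ^+ l *: a = 0.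
Proof. by move=> Al _ [a [Aa ->]]; rewrite scalerA -exprSr; apply: Al. Qed.

Lemma up_down_lift A (A' : B -> Prop) :
  (forall b, A b <-> up p A' b) -> forall b, up p (down p A) b <-> A b.
Proof.
move=> defA b; split=> [[a [Aa eq_pb]] | Ab]; last by exists b.
by apply/defA; rewrite /up eq_pb; apply/defA.
Qed.

Lemma down_up_reduction A (A' : B -> Prop) :
  (forall b, A b <-> down p A' b) -> forall b, down p (up p A) b <-> A b.
Proof.
move=> defA b; split=> [[a [Aa ->]] // | Ab].
have [a [_ eq_b]] := proj1 (defA b) Ab.
by exists a; rewrite /up -eq_b.
Qed.

Lemma is_obj_up A : is_obj p B A -> is_obj p B (up p A).
Proof. by move=> [pB subA]; split=> //; apply: submod_up. Qed.

Lemma is_obj_down A : is_obj p B A -> is_obj p B (down p A).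
Proof. by move=> [pB subA]; split=> //; apply: submod_down. Qed.

End LiftReduce.

Lemma mor_down (R : idomainType) (p : R) (B B' : lmodType R)
    (A : B -> Prop) (A' : B' -> Prop) (f : {linear B -> B'}) :
  mor A A' f -> mor (down p A) (down p A') f.
Proof. by move=> fA _ [a [Aa ->]]; exists (f a); rewrite linearZ; split=> //; apply: fA. Qed.

Lemma mor_up (R : idomainType) (p : R) (B B' : lmodType R)
    (A : B -> Prop) (A' : B' -> Prop) (f : {linear B -> B'}) :
  mor A A' f -> mor (up p A) (up p A') f.
Proof. by move=> fA b Ab; rewrite /up -linearZ; apply: fA. Qed.

Lemma updown_iso_of_stable (R : idomainType) (p : R) (U V : cat_class R) :
  (forall B A0, U B A0 -> V B (up p A0)) ->
  (forall B A0, V B A0 -> U B (down p A0)) ->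
  updown_iso p U V.
Proof.
move=> UV VU; split; [|split; [|split]].
- move=> B A [A0 [UA0 defA]]; split; last exact: up_down_lift defA.
  exists (up p A0); split; first exact: UV.
  move=> b; split=> -[a [Aa eq_b]]; exists a; split=> //; exact/defA.
- move=> B A [A0 [VA0 defA]]; split; last exact: down_up_reduction defA.
  by exists (down p A0); split; [exact: VU | move=> b; apply: defA].
- by move=> B B' A A' f _ _; apply: mor_down.
- by move=> B B' A A' f _ _; apply: mor_up.
Qed.

Theorem lemma7 (R : idomainType) (p : R) (hR : is_PID R)
  (hp : maximal_ideal (principal_ideal p)) (l n : nat) :
  updown_iso p (catS p) (catS p)
  /\ updown_iso p (catSn p n) (catSn p n)
  /\ updown_iso p (catSl p l) (catSl p l.+1)
  /\ updown_iso p (catSln p l n) (catSln p l.+1 n).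
Proof.
split; [|split; [|split]]; apply: updown_iso_of_stable => B A.
- exact: is_obj_up.
- exact: is_obj_down.
- by move=> [objA Bn]; split; first exact: is_obj_up.
- by move=> [objA Bn]; split; first exact: is_obj_down.
- by move=> [objA Al]; split; [exact: is_obj_up | exact: up_annihilated].
- by move=> [objA Al]; split; [exact: is_obj_down | exact: down_annihilated].
- move=> [objA [Al Bn]]; split; first exact: is_obj_up.
  by split=> //; apply: up_annihilated.
- move=> [objA [Al Bn]]; split; first exact: is_obj_down.
  by split=> //; apply: down_annihilated.
Qed.
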